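(* Let $m\geq 13$ and $n\geq 13$ be integers. If $f$ is a signed Roman dominating function of minimum weight on $C_m\vee C_n$ such that $\sum_{y\in N_{C_m}[x]}f(y)<0$ for some $x\in V(C_m)$, then $\gamma_{sR}(C_m\vee C_n)\geq 3$.
   Context: $C_n$ denotes the cycle on $n$ vertices; in $C_m\vee C_n$ the vertex sets $V(C_m)$ and $V(C_n)$ are disjoint. For a graph $G=(V,E)$ and $x\in V$, $N_G[x]=\{x\}\cup\{y: xy\in E\}$ is the closed neighborhood (so $N_{C_m}[x]$ consists of $x$ and its two neighbors on the cycle $C_m$). A signed Roman dominating function (SRDF) on $G$ is a function $f:V\to\{-1,1,2\}$ such that (a) $\sum_{y\in N_G[x]}f(y)\geq 1$ for every $x\in V$, and (b) every vertex $x$ with $f(x)=-1$ is adjacent to at least one vertex $y$ with $f(y)=2$. The weight of $f$ is $\sum_{x\in V}f(x)$, and $\gamma_{sR}(G)$ is the minimum weight of an SRDF on $G$. The join $G_1\vee G_2$ of two graphs has vertex set $V(G_1)\cup V(G_2)$ (disjoint union) and edge set $E(G_1)\cup E(G_2)\cup\{uv: u\in V(G_1), v\in V(G_2)\}$. *)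

From mathcomp Require Import all_boot all_order all_algebra.
Set Implicit Arguments. Unset Strict Implicit. Unset Printing Implicit Defensive.
Import Order.TTheory GRing.Theory Num.Theory.
Local Open Scope ring_scope.

Definition closed_nbhd (V : finType) (adj : rel V) (x : V) : {set V} :=
  [set y | (y == x) || adj x y].

Definition is_SRDF (V : finType) (adj : rel V) (f : V -> int) : Prop :=
  (forall x, f x \in [:: -1; 1; 2]) /\
  (forall x, 1 <= \sum_(y in closed_nbhd adj x) f y) /\
  (forall x, f x = -1 -> exists y, adj x y /\ f y = 2).

Definition weight (V : finType) (f : V -> int) : int := \sum_(x : V) f x.

Definition is_gamma_sR (V : finType) (adj : rel V) (k : int) : Prop :=
  (exists f, is_SRDF adj f /\ weight f = k) /\
  (forall g, is_SRDF adj g -> k <= weight g).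

Definition min_SRDF (V : finType) (adj : rel V) (f : V -> int) : Prop :=
  is_SRDF adj f /\ forall g, is_SRDF adj g -> weight f <= weight g.

(* the cycle C_m on vertex set 'I_m (meaningful for m >= 3) *)
Definition cycle_adj (m : nat) : rel 'I_m :=
  fun i j => ((j : nat) == (i.+1 %% m)%N) || ((i : nat) == (j.+1 %% m)%N).

Definition join_adj (V1 V2 : finType) (a1 : rel V1) (a2 : rel V2) : rel (V1 + V2)%type :=
  fun u v => match u, v with
             | inl x, inl y => a1 x y
             | inr x, inr y => a2 x y
             | _, _ => true
             end.

Definition CmCn_adj (m n : nat) : rel ('I_m + 'I_n)%type :=
  join_adj (@cycle_adj m) (@cycle_adj n).

(* Write A and B for the total weight of f on C_m and on C_n. At the vertex x of C_m
   whose closed C_m-neighbourhood has negative weight, the SRDF condition forces B >= 2.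
   Summing the SRDF condition over the n vertices of C_n, where every vertex lies in
   exactly three closed neighbourhoods, gives n (1 - A) <= 3 B. If A >= 1 then A + B >= 3;
   otherwise 3 (A + B) >= n - (n - 3) A >= n, which is enough as soon as n >= 7. *)

From mathcomp Require Import all_boot all_order all_algebra zify.
Set Implicit Arguments. Unset Strict Implicit. Unset Printing Implicit Defensive.
Import Order.TTheory GRing.Theory Num.Theory.
Local Open Scope ring_scope.

Section CycleNeighbourhoods.

Variable n : nat.
Hypothesis n_ge3 : (3 <= n)%N.

Lemma cycle_closed_nbhdE (y : 'I_n) :
  closed_nbhd (@cycle_adj n) y = [set y; ordS y; ord_pred y].
Proof.
apply/setP=> z; rewrite !inE /cycle_adj.
have -> : (z == ord_pred y) = (y == z.+1 %% n :> nat)%N.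
  apply/eqP/eqP=> [->|h]; first by have /(congr1 val) := ord_predK y.
  by rewrite -[z]ordSK; congr ord_pred; apply: val_inj.
by rewrite orbA.
Qed.

Lemma add_modn_neq (y k : nat) : (y < n)%N -> (0 < k < n)%N -> ((y + k) %% n != y)%N.
Proof.
move=> y_lt /andP[k_gt0 k_lt]; have := eqn_modDl y k 0 n.
by rewrite addn0 (modn_small y_lt) mod0n (modn_small k_lt) => ->; rewrite -lt0n.
Qed.

Lemma neq_ordS (y : 'I_n) : y != ordS y.
Proof. by rewrite eq_sym -(inj_eq val_inj) /= -addn1 add_modn_neq //; lia. Qed.

Lemma neq_ord_pred (y : 'I_n) : y != ord_pred y.
Proof. by rewrite -(inj_eq (@ordS_inj n)) ord_predK eq_sym neq_ordS. Qed.

Lemma ordS_neq_ord_pred (y : 'I_n) : ordS y != ord_pred y.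
Proof.
rewrite -(inj_eq (@ordS_inj n)) ord_predK -(inj_eq val_inj) /=.
by rewrite -[(_ %% n).+1]addn1 modnDml addn1 -addn2 add_modn_neq.
Qed.

Lemma sum_cycle_closed_nbhd (g : 'I_n -> int) (y : 'I_n) :
  \sum_(z in closed_nbhd (@cycle_adj n) y) g z = g y + g (ordS y) + g (ord_pred y).
Proof.
have y_notin : y \notin [set ordS y; ord_pred y].
  by rewrite !inE negb_or neq_ordS neq_ord_pred.
rewrite cycle_closed_nbhdE -setUA big_setU1 //= big_setU1 ?inE ?ordS_neq_ord_pred //=.
by rewrite big_set1 addrA.
Qed.

Lemma sum_sum_cycle_closed_nbhd (g : 'I_n -> int) :
  \sum_y \sum_(z in closed_nbhd (@cycle_adj n) y) g z = 3 * \sum_y g y.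
Proof.
under eq_bigr do rewrite sum_cycle_closed_nbhd.
have sum_ordS : \sum_y g (ordS y) = \sum_y g y.
  by rewrite [RHS](reindex_inj (@ordS_inj n)).
have sum_ord_pred : \sum_y g (ord_pred y) = \sum_y g y.
  by rewrite [RHS](reindex_inj (@ord_pred_inj n)).
rewrite !big_split /= sum_ordS sum_ord_pred.
by rewrite -[3]/(1 + 1 + 1 : int) !mulrDl mul1r.
Qed.

End CycleNeighbourhoods.

Section JoinNeighbourhoods.

Variables (V1 V2 : finType) (a1 : rel V1) (a2 : rel V2) (f : (V1 + V2)%type -> int).

Lemma sum_join_closed_nbhd_inl (x : V1) :
  \sum_(v in closed_nbhd (join_adj a1 a2) (inl x)) f v =
  \sum_(y in closed_nbhd a1 x) f (inl y) + \sum_j f (inr j).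
Proof. by rewrite big_sumType; congr (_ + _); apply: eq_bigl => y; rewrite !inE. Qed.

Lemma sum_join_closed_nbhd_inr (x : V2) :
  \sum_(v in closed_nbhd (join_adj a1 a2) (inr x)) f v =
  \sum_i f (inl i) + \sum_(y in closed_nbhd a2 x) f (inr y).
Proof. by rewrite big_sumType; congr (_ + _); apply: eq_bigl => y; rewrite !inE. Qed.

End JoinNeighbourhoods.

Lemma min_SRDF_weight (V : finType) (adj : rel V) (f : V -> int) (k : int) :
  min_SRDF adj f -> is_gamma_sR adj k -> weight f = k.
Proof.
move=> [SRDF_f f_min] [[g [SRDF_g <-]] k_min].
by apply/eqP; rewrite eq_le f_min // k_min.
Qed.

Section JoinWithCycle.

Variables (V : finType) (a : rel V) (n : nat) (f : (V + 'I_n)%type -> int).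
Hypothesis SRDF_f : is_SRDF (join_adj a (@cycle_adj n)) f.

Let A := \sum_i f (inl i).
Let B := \sum_j f (inr j).

Lemma weight_join_cycle : weight f = A + B.
Proof. by rewrite /weight big_sumType. Qed.

Lemma sum_inr_ge2 (x : V) :
  \sum_(y in closed_nbhd a x) f (inl y) < 0 -> 2 <= B.
Proof.
move=> nbhd_neg; have [_ [dom _]] := SRDF_f.
have := dom (inl x); rewrite sum_join_closed_nbhd_inl -/B.
by move: nbhd_neg; set s := \sum_(y in _) _; lia.
Qed.

Lemma sum_inr_cycle_bound : (3 <= n)%N -> n%:Z * (1 - A) <= 3 * B.
Proof.
move=> n_ge3; have [_ [dom _]] := SRDF_f.
rewrite -(sum_sum_cycle_closed_nbhd n_ge3) -natz mulr_natl.
rewrite -[X in _ *+ X]card_ord -sumr_const.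
apply: ler_sum => j _.
by rewrite lerBlDl -(sum_join_closed_nbhd_inr a).
Qed.

Lemma weight_join_cycle_ge3 (x : V) :
  (7 <= n)%N -> \sum_(y in closed_nbhd a x) f (inl y) < 0 -> 3 <= weight f.
Proof.
move=> n_ge7 /sum_inr_ge2 B_ge2.
have cycle_bound : n%:Z * (1 - A) <= 3 * B by apply: sum_inr_cycle_bound; lia.
rewrite weight_join_cycle; have n_ge7_int : 7 <= n%:Z by rewrite lez_nat.
case: (lerP 1 A) => [A_ge1 | A_lt1]; first lia.
have : 0 <= (n%:Z - 3) * - A by apply: mulr_ge0; lia.
nia.
Qed.

End JoinWithCycle.

Theorem mainTheorem7 (m n : nat) (hm : (13 <= m)%N) (hn : (13 <= n)%N)
  (f : ('I_m + 'I_n)%type -> int) :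
  min_SRDF (@CmCn_adj m n) f ->
  (exists x : 'I_m, \sum_(y in closed_nbhd (@cycle_adj m) x) f (inl y) < 0) ->
  forall k : int, is_gamma_sR (@CmCn_adj m n) k -> 3 <= k.
Proof.
move=> f_min [x x_neg] k gamma_k.
rewrite -(min_SRDF_weight f_min gamma_k).
by apply: weight_join_cycle_ge3 (proj1 f_min) x _ x_neg; lia.
Qed.
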